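(* Let $t$ be the number of erroneous nodes in the distributed storage system built from the concatenation of an MRD code and an optimal repair MDS array code, as described in the context. If $2t\alpha+1\leq \delta$, then the original data can be recovered from any $k$ nodes.
   Context: A file of size $M=KN$ over $\mathbb{F}_q$ (with $K<N$) is arranged as an $N\times K$ matrix $\mathcal{M}$ over $\mathbb{F}_q$. Let $\mathcal{C}$ be an $[N\times m, NK, \delta=m-K+1]$ Gabidulin maximum rank distance (MRD) code with $m\leq N$, whose codewords are viewed as vectors in $\mathbb{F}_{q^N}^m$; let $\mathbf{c}_{\mathcal{M}}\in\mathbb{F}_{q^N}^m$ be the codeword corresponding to $\mathcal{M}$. Let $\alpha,k$ be positive integers with $m=\alpha k$, and set $Q=q^N$. Let $C$ be an $(n,k)$ optimal repair MDS array code of dimensions $\alpha\times n$ whose generator matrix (a $k\times n$ block matrix of $\alpha\times\alpha$ blocks) is over $\mathbb{F}_q$, and whose node repairs use $\mathbb{F}_q$-linear combinations of stored symbols; here an MDS array code means any $k$ nodes suffice to recover the encoded data, and optimal repair means a failed node can be repaired by downloading $\alpha d/(d-k+1)$ symbols from each node in any set of $d\ge k$ surviving nodes. The vector $\mathbf{c}_{\mathcal{M}}$ is split into $k$ blocks of size $\alpha$ and encoded with $C$ into $n$ nodes each storing $\alpha$ symbols of $\mathbb{F}_Q$. Errors are static: an adversary replaces the content of each of the $t$ affected nodes (adds an arbitrary error vector in $\mathbb{F}_Q^\alpha$) only once, and the affected node uses this same polluted content in all subsequent repair and data-collection processes; repairs are performed obliviously, so errors may propagate to repaired nodes. *)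

From HB Require Import structures.
From mathcomp Require Import all_boot all_algebra all_field.

Set Implicit Arguments.
Unset Strict Implicit.
Unset Printing Implicit Defensive.

Import GRing.Theory.
Local Open Scope ring_scope.

(* F plays the role of F_q, L the role of F_Q = F_{q^N} (a finite-dimensional
   field extension of F). *)

Definition lift_mx (F : fieldType) (L : fieldExtType F) (m p : nat)
  (A : 'M[F]_(m, p)) : 'M[L]_(m, p) := map_mx (fun a : F => a%:A) A.

(* b : an F-basis of L (to read a column of the N x K file matrix as an element
   of L); g : the m = alpha*k evaluation points, F-linearly independent,
   indexed as (block j, position r) so that the codeword is already split into
   k blocks of size alpha. *)
Definition gab_msg (F : finFieldType) (L : fieldExtType F) (N K : nat)
  (b : 'I_N -> L) (M : 'M[F]_(N, K)) (l : 'I_K) : L :=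
  \sum_(i < N) M i l *: b i.

Definition gab_enc (F : finFieldType) (L : fieldExtType F) (N K k alpha : nat)
  (b : 'I_N -> L) (g : 'I_k -> 'I_alpha -> L) (M : 'M[F]_(N, K))
  : 'I_k -> 'rV[L]_alpha :=
  fun j => \row_(r < alpha)
    \sum_(l < K) gab_msg b M l * g j r ^+ (#|F| ^ l)%N.

(* G j i : the (j,i) alpha x alpha block of the k x n block generator matrix *)
Definition encF (F : fieldType) (k n alpha : nat)
  (G : 'I_k -> 'I_n -> 'M[F]_alpha) (x : 'I_k -> 'rV[F]_alpha) (i : 'I_n)
  : 'rV[F]_alpha := \sum_(j < k) x j *m G j i.

Definition encL (F : fieldType) (L : fieldExtType F) (k n alpha : nat)
  (G : 'I_k -> 'I_n -> 'M[F]_alpha) (x : 'I_k -> 'rV[L]_alpha) (i : 'I_n)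
  : 'rV[L]_alpha := \sum_(j < k) x j *m lift_mx L (G j i).

Definition is_MDS_array (F : fieldType) (k n alpha : nat)
  (G : 'I_k -> 'I_n -> 'M[F]_alpha) : Prop :=
  forall S : {set 'I_n}, #|S| = k ->
  forall x y : 'I_k -> 'rV[F]_alpha,
    (forall i, i \in S -> encF G x i = encF G y i) -> x = y.

Definition repair_beta (k alpha d : nat) : nat := (alpha %/ (d.+1 - k))%N.

(* Optimal (linear) repair: a failed node f is repaired from any set H of d
   other nodes; helper h sends beta = alpha/(d-k+1) F-linear combinations
   (content_h *m Dm f H h) of its symbols, and f rebuilds its content
   F-linearly from the downloaded symbols (via Rm f H h). *)
Definition optimal_repair (F : fieldType) (k n alpha d : nat)
  (G : 'I_k -> 'I_n -> 'M[F]_alpha)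
  (Dm : 'I_n -> {set 'I_n} -> 'I_n -> 'M[F]_(alpha, repair_beta k alpha d))
  (Rm : 'I_n -> {set 'I_n} -> 'I_n -> 'M[F]_(repair_beta k alpha d, alpha))
  : Prop :=
  [/\ (k <= d)%N, (d < n)%N, (d.+1 - k %| alpha)%N &
   forall (f : 'I_n) (H : {set 'I_n}), f \notin H -> #|H| = d ->
   forall x : 'I_k -> 'rV[F]_alpha,
     \sum_(h in H) (encF G x h *m Dm f H h) *m Rm f H h = encF G x f].

Inductive event (L : Type) (n alpha : nat) : Type :=
  | Inject of 'I_n & 'rV[L]_alpha
  | Repair of 'I_n & {set 'I_n}.

(* state: node contents and the set of nodes affected by the adversary *)
Definition sys_state (L : Type) (n alpha : nat) : Type :=
  (('I_n -> 'rV[L]_alpha) * {set 'I_n})%type.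

Definition sys_step (F : fieldType) (L : fieldExtType F) (k n alpha d : nat)
  (Dm : 'I_n -> {set 'I_n} -> 'I_n -> 'M[F]_(alpha, repair_beta k alpha d))
  (Rm : 'I_n -> {set 'I_n} -> 'I_n -> 'M[F]_(repair_beta k alpha d, alpha))
  (s : sys_state L n alpha) (ev : event L n alpha) : sys_state L n alpha :=
  let: (c, A) := s in
  match ev with
  | Inject i e =>
      (* each affected node is polluted only once *)
      if i \in A then s
      else ((fun j => if j == i then c j + e else c j), i |: A)
  | Repair f H =>
      (* affected nodes keep their polluted content; repairs are oblivious *)
      if (f \in A) || (f \in H) || (#|H| != d) then s
      else ((fun j => if j == f then
               \sum_(h in H) (c h *m lift_mx L (Dm f H h)) *m lift_mx L (Rm f H h)
             else c j), A)
  end.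

Definition sys_run (F : finFieldType) (L : fieldExtType F) (N K k n alpha d : nat)
  (b : 'I_N -> L) (g : 'I_k -> 'I_alpha -> L)
  (G : 'I_k -> 'I_n -> 'M[F]_alpha)
  (Dm : 'I_n -> {set 'I_n} -> 'I_n -> 'M[F]_(alpha, repair_beta k alpha d))
  (Rm : 'I_n -> {set 'I_n} -> 'I_n -> 'M[F]_(repair_beta k alpha d, alpha))
  (M : 'M[F]_(N, K)) (evs : seq (event L n alpha)) : sys_state L n alpha :=
  foldl (sys_step Dm Rm) (encL G (gab_enc b g M), set0) evs.

(* what a data collector connecting to the node set S sees *)
Definition restrict (F : fieldType) (L : fieldExtType F) (n alpha : nat) (S : {set 'I_n})
  (c : 'I_n -> 'rV[L]_alpha) : 'I_n -> 'rV[L]_alpha :=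
  fun i => if i \in S then c i else 0.

From HB Require Import structures.
From mathcomp Require Import all_boot all_algebra all_field.
From mathcomp Require Import zify.
From Stdlib Require Import ClassicalEpsilon.

Set Implicit Arguments.
Unset Strict Implicit.
Unset Printing Implicit Defensive.

Import GRing.Theory.
Local Open Scope ring_scope.

(* Errors are static and repairs are F-linear, so at any time the deviation of
   the stored contents from the clean codeword has all its entries in an
   F-subspace of L of dimension at most alpha * t.  Two runs that agree on k
   nodes therefore encode, by the MDS property applied through F-linear
   functionals, Gabidulin codewords whose difference has its entries in a space
   of dimension at most 2 t alpha < delta.  A nonzero linearized polynomial of
   q-degree below K cannot vanish on a K-dimensional space, so by rank-nullity
   the two files coincide, and any file explaining the observed contents is
   the stored one. *)

Section LiftedArrayCode.
Variables (F : fieldType) (L : fieldExtType F).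

Lemma lift_mxM m p r (A : 'M[F]_(m, p)) (B : 'M[F]_(p, r)) :
  lift_mx L (A *m B) = lift_mx L A *m lift_mx L B.
Proof. exact: (map_mxM (in_alg L)). Qed.

Lemma lift_mx_sum m p (I : finType) (P : pred I) (A : I -> 'M[F]_(m, p)) :
  lift_mx L (\sum_(i | P i) A i) = \sum_(i | P i) lift_mx L (A i).
Proof. exact: (map_mx_sum (in_alg L)). Qed.

Lemma mulmx_lift_vspace alpha beta (V : {vspace L}) (v : 'rV[L]_alpha)
    (A : 'M[F]_(alpha, beta)) :
  (forall r, v 0 r \in V) -> forall c, (v *m lift_mx L A) 0 c \in V.
Proof.
move=> vV c; rewrite mxE; apply: memv_suml => r _.
by rewrite mxE mulr_algr memvZ.
Qed.

Variables (k n alpha d : nat) (G : 'I_k -> 'I_n -> 'M[F]_alpha).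
Variables (Dm : 'I_n -> {set 'I_n} -> 'I_n -> 'M[F]_(alpha, repair_beta k alpha d))
  (Rm : 'I_n -> {set 'I_n} -> 'I_n -> 'M[F]_(repair_beta k alpha d, alpha)).

(* Feeding the repair identity the data that is a unit vector in block j
   isolates the block column of the generator. *)
Lemma repair_generator_block (f : 'I_n) (H : {set 'I_n}) : optimal_repair G Dm Rm ->
  f \notin H -> #|H| = d ->
  forall j, \sum_(h in H) G j h *m Dm f H h *m Rm f H h = G j f.
Proof.
case=> _ _ _ rep fH cH j; apply/row_matrixP => r.
pose x j' : 'rV[F]_alpha := if j' == j then delta_mx 0 r else 0.
have encx i : encF G x i = delta_mx 0 r *m G j i.
  rewrite /encF (bigD1 j) //= /x eqxx big1 ?addr0 // => j' /negPf ->.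
  by rewrite mul0mx.
rewrite !rowE -encx -(rep f H fH cH x) mulmx_sumr.
by apply: eq_bigr => h _; rewrite encx !mulmxA.
Qed.

Lemma encL_repair (f : 'I_n) (H : {set 'I_n}) : optimal_repair G Dm Rm ->
  f \notin H -> #|H| = d ->
  forall x : 'I_k -> 'rV[L]_alpha,
  \sum_(h in H) (encL G x h *m lift_mx L (Dm f H h)) *m lift_mx L (Rm f H h)
    = encL G x f.
Proof.
move=> rep fH cH x; rewrite /encL.
under eq_bigr => h _ do rewrite !mulmx_suml.
rewrite exchange_big /=; apply: eq_bigr => j _.
rewrite -(repair_generator_block rep fH cH) lift_mx_sum mulmx_sumr.
by apply: eq_bigr => h _; rewrite !lift_mxM !mulmxA.
Qed.

End LiftedArrayCode.

Section Pollution.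
Variables (F : fieldType) (L : fieldExtType F) (k n alpha d : nat).
Variables (G : 'I_k -> 'I_n -> 'M[F]_alpha)
  (Dm : 'I_n -> {set 'I_n} -> 'I_n -> 'M[F]_(alpha, repair_beta k alpha d))
  (Rm : 'I_n -> {set 'I_n} -> 'I_n -> 'M[F]_(repair_beta k alpha d, alpha)).

Definition pollution_bounded (c0 : 'I_n -> 'rV[L]_alpha)
    (s : sys_state L n alpha) : Prop :=
  exists V : {vspace L}, (\dim V <= alpha * #|s.2|)%N /\
    forall i r, (s.1 i - c0 i) 0 r \in V.

Lemma pollution_bounded_step (x : 'I_k -> 'rV[L]_alpha) s ev :
  optimal_repair G Dm Rm ->
  pollution_bounded (encL G x) s ->
  pollution_bounded (encL G x) (sys_step Dm Rm s ev).
Proof.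
move=> rep; case: s ev => [c A] [i e | f H] [V [dimV devV]] /=.
- case: ifP => iA; first by exists V.
  pose E := <<[seq e 0%R r | r <- enum 'I_alpha]>>%VS.
  exists (V + E)%VS; split.
    rewrite /= cardsU1 iA mulnDr muln1 addnC.
    apply: leq_trans (dimv_add_leqif _ _) _; apply: leq_add => //.
    by apply: leq_trans (dim_span _) _; rewrite size_map size_enum_ord.
  move=> j r /=; case: eqP => [-> | _]; last exact/(subvP (addvSl _ _))/devV.
  rewrite addrAC mxE memvD //; first exact/(subvP (addvSl _ _))/devV.
  by apply/(subvP (addvSr _ _))/memv_span; rewrite map_f ?mem_enum.
- case: ifP => [_ | /negbT]; first by exists V.
  rewrite !negb_or negbK => /andP[/andP[fA fH] /eqP cH].
  exists V; split => // j r /=; case: eqP => [-> | _]; last exact: devV.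
  rewrite -(encL_repair rep fH cH) -sumrB summxE; apply: memv_suml => h _.
  rewrite -!mulmxBl; apply: mulmx_lift_vspace => c1.
  by apply: mulmx_lift_vspace => c2; apply: devV.
Qed.

End Pollution.

Section ScalarFunctional.
Variables (F : fieldType) (L : fieldExtType F).

Lemma vspace_separation (W : {vspace L}) (v : L) : v \notin W ->
  exists phi : {scalar L}, (forall w, w \in W -> phi w = 0) /\ phi v != 0.
Proof.
move=> vW; set w := v - projv W v.
have w_neq0 : w != 0.
  by apply: contra vW; rewrite subr_eq0 => /eqP ->; apply: memv_proj.
have [i wi] : exists i, coord (vbasis fullv) i w != 0.
  apply/existsP; apply: contraR w_neq0; rewrite negb_exists => /forallP w0.
  rewrite (coord_vbasis (memvf w)) big1 // => i _.
  by move/negPn/eqP: (w0 i) => ->; rewrite scale0r.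
exists (coord (vbasis fullv) i \o (\1 - projv W)%VF); split=> [u uW|] /=.
  by rewrite add_lfunE opp_lfunE id_lfunE projv_id // subrr linear0.
by rewrite add_lfunE opp_lfunE id_lfunE.
Qed.

Lemma map_scalar_encL (k n alpha : nat) (G : 'I_k -> 'I_n -> 'M[F]_alpha)
    (phi : {scalar L}) (x : 'I_k -> 'rV[L]_alpha) i :
  map_mx phi (encL G x i) = encF G (fun j => map_mx phi (x j)) i.
Proof.
apply/rowP => c; rewrite /encL /encF !mxE !summxE raddf_sum.
apply: eq_bigr => j _; rewrite !mxE raddf_sum; apply: eq_bigr => r _.
rewrite !mxE mulr_algr mulrC; exact: scalarZ.
Qed.

(* An F-linear functional killing [W] maps [x] to F-data whose encoding
   vanishes on [S], hence to zero; such functionals detect [W]. *)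
Lemma MDS_array_lift_vspace (k n alpha : nat) (G : 'I_k -> 'I_n -> 'M[F]_alpha)
    (S : {set 'I_n}) (W : {vspace L}) (x : 'I_k -> 'rV[L]_alpha) :
  is_MDS_array G -> #|S| = k ->
  (forall i, i \in S -> forall r, encL G x i 0 r \in W) ->
  forall j r, x j 0 r \in W.
Proof.
move=> mds cardS xW j r; apply: contraT => /vspace_separation[phi [phiW phix]].
pose y j := map_mx phi (x j).
have y0 : y = fun=> 0.
  apply: (mds S cardS) => i iS; rewrite -map_scalar_encL.
  rewrite /encF big1 => [|j' _]; last by rewrite mul0mx.
  by apply/rowP => c; rewrite !mxE phiW ?xW.
have : y j 0 r = 0 by rewrite y0 mxE.
by rewrite mxE => /eqP; rewrite (negbTE phix).
Qed.

End ScalarFunctional.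

Section LinearizedPolynomials.
Variables (F : finFieldType) (L : fieldExtType F).
Local Notation q := #|F|.

Lemma q_gt1 : (1 < q)%N.
Proof. exact: card_finNzRing_gt1. Qed.

Lemma exprD_qpow l (x y : L) : (x + y) ^+ (q ^ l) = x ^+ (q ^ l) + y ^+ (q ^ l).
Proof.
have [p p_pr p_char] := finPcharP F.
rewrite (card_pprimeChar p_char) -expnM; apply: exprDn_pchar.
by rewrite pnatX (eq_pnat _ (pchar_lalg L)) pnatE ?p_char.
Qed.

Lemma expf_qpow l (a : F) : a ^+ (q ^ l) = a.
Proof. by elim: l => [|l IHl]; rewrite ?expr1 // expnSr exprM IHl expf_card. Qed.

Lemma exprZ_qpow l (a : F) (x : L) : (a *: x) ^+ (q ^ l) = a *: x ^+ (q ^ l).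
Proof. by rewrite exprZn expf_qpow. Qed.

Definition linearized K (u : 'I_K -> L) (z : L) : L :=
  \sum_(l < K) u l * z ^+ (q ^ l).

Lemma linearized_is_linear K (u : 'I_K -> L) : linear (linearized u).
Proof.
move=> a x y; rewrite /linearized scaler_sumr -big_split /=.
by apply: eq_bigr => l _; rewrite exprD_qpow exprZ_qpow mulrDr scalerAr.
Qed.

HB.instance Definition _ K u :=
  GRing.isLinear.Build F L L *:%R (@linearized K u) (linearized_is_linear u).

Lemma vspace_uniq_elements (U : {vspace L}) :
  exists2 s : seq L, uniq s /\ size s = (q ^ \dim U)%N & {subset s <= U}.
Proof.
pose comb (c : {ffun 'I_(\dim U) -> F}) := \sum_i c i *: (vbasis U)`_i.
exists [seq comb c | c <- enum {ffun 'I_(\dim U) -> F}]; last first.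
  move=> _ /mapP[c _ ->]; apply: memv_suml => i _; apply/memvZ/vbasis_mem.
  by rewrite mem_nth ?size_tuple.
rewrite size_map -cardE card_ffun card_ord; split=> //.
rewrite map_inj_uniq ?enum_uniq // => c1 c2 eq_c; apply/ffunP => i.
apply/eqP; rewrite -subr_eq0; apply/eqP; move: i.
apply: (freeP (basis_free (vbasisP U))); rewrite -[RHS](subrr (comb c2)).
by rewrite -{1}eq_c -sumrB; apply: eq_bigr => i _; rewrite scalerBl.
Qed.

(* A nonzero linearized polynomial of q-degree below K has degree at most
   q^(K-1), so it cannot vanish on the q^K points of a K-dimensional space. *)
Lemma linearized_eq0 K (u : 'I_K -> L) (U : {vspace L}) :
  (K <= \dim U)%N -> (forall z, z \in U -> linearized u z = 0) -> u =1 fun=> 0.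
Proof.
move=> dimU u0 l /=; apply: contraTeq isT => ul_neq0.
pose P : {poly L} := \sum_(l < K) u l *: 'X^(q ^ l).
have P_eval z : P.[z] = linearized u z.
  by rewrite horner_sum; apply: eq_bigr => l' _; rewrite hornerZ hornerXn.
have coefP : P`_(q ^ l) = u l.
  rewrite coef_sum (bigD1 l) //= coefZ coefXn eqxx mulr1 big1 ?addr0 //.
  move=> l' /negPf neq_l; rewrite coefZ coefXn eqn_exp2l ?q_gt1 //.
  by rewrite (inj_eq val_inj) eq_sym neq_l mulr0.
have P_neq0 : P != 0 by apply: contraNneq ul_neq0 => P0; rewrite -coefP P0 coef0.
have sizeP : (size P <= (q ^ K.-1).+1)%N.
  apply: leq_trans (size_sum _ _ _) _; apply/bigmax_leqP => l' _.
  apply: leq_trans (size_scale_leq _ _) _.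
  by rewrite size_polyXn ltnS leq_exp2l ?q_gt1 //; have := ltn_ord l'; lia.
have [s [s_uniq size_s] sU] := vspace_uniq_elements U.
have sP : all (root P) s by apply/allP => z /sU zU; rewrite /root P_eval u0.
have := leq_trans (max_poly_roots P_neq0 sP s_uniq) sizeP.
rewrite size_s ltnS leqNgt ltn_exp2l ?q_gt1 // => /negP[].
by rewrite prednK // (leq_ltn_trans (leq0n l) (ltn_ord l)).
Qed.

(* Rank-nullity: the linearized map kills a subspace of <<X>> of dimension at
   least size X - \dim W >= K. *)
Lemma gabidulin_rank_weight K (u : 'I_K -> L) (X : seq L) (W : {vspace L}) :
  free X -> (\dim W + K <= size X)%N ->
  (forall z, z \in X -> linearized u z \in W) -> u =1 fun=> 0.
Proof.
move=> freeX dimW uXW.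
pose f := linfun (linearized u).
have imgW : (f @: <<X>> <= W)%VS.
  by rewrite limg_span; apply/span_subvP => _ /mapP[z zX ->]; rewrite lfunE uXW.
have := limg_ker_dim f <<X>>; have := dimvS imgW; move/eqP: freeX => ->.
move=> dim_img dim_ker; apply: (@linearized_eq0 _ _ (<<X>> :&: lker f)%VS).
  rewrite -(leq_add2r (\dim (f @: <<X>>))) dim_ker; apply: leq_trans _ dimW.
  by rewrite addnC leq_add2r.
by move=> z; rewrite memv_cap memv_ker lfunE => /andP[_ /eqP].
Qed.

End LinearizedPolynomials.

Section Decoding.
Variables (F : finFieldType) (L : fieldExtType F) (N K alpha k n d : nat).
Variables (b : 'I_N -> L) (g : 'I_k -> 'I_alpha -> L) (G : 'I_k -> 'I_n -> 'M[F]_alpha)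
  (Dm : 'I_n -> {set 'I_n} -> 'I_n -> 'M[F]_(alpha, repair_beta k alpha d))
  (Rm : 'I_n -> {set 'I_n} -> 'I_n -> 'M[F]_(repair_beta k alpha d, alpha)).

Lemma pollution_bounded_run (M : 'M[F]_(N, K)) evs :
  optimal_repair G Dm Rm ->
  pollution_bounded (encL G (gab_enc b g M)) (sys_run b g G Dm Rm M evs).
Proof.
move=> rep; rewrite /sys_run.
have : pollution_bounded (encL G (gab_enc b g M)) (encL G (gab_enc b g M), set0).
  by exists 0%VS; rewrite dimv0; split=> // i r; rewrite subrr mxE mem0v.
elim: evs (encL G (gab_enc b g M), set0) => [|ev evs IH] s sP //=.
exact/IH/pollution_bounded_step.
Qed.

Lemma gab_msg_inj (M M' : 'M[F]_(N, K)) :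
  basis_of fullv [seq b i | i <- enum 'I_N] ->
  gab_msg b M =1 gab_msg b M' -> M = M'.
Proof.
move=> /basis_free free_b eqM; apply/matrixP => i l.
apply/eqP; rewrite -subr_eq0; apply/eqP; move: i.
apply: (freeP (free_b : free [tuple b i | i < N])).
rewrite -[RHS](subrr (gab_msg b M' l)) -{1}eqM /gab_msg -sumrB.
by apply: eq_bigr => i _; rewrite -tnth_nth tnth_mktuple scalerBl.
Qed.

Lemma gab_encB (M M' : 'M[F]_(N, K)) j r :
  (gab_enc b g M j - gab_enc b g M' j) 0 r
    = linearized (fun l => gab_msg b M l - gab_msg b M' l) (g j r).
Proof. by rewrite !mxE -sumrB; apply: eq_bigr => l _; rewrite mulrBl. Qed.

Lemma encLB (x y : 'I_k -> 'rV[L]_alpha) i :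
  encL G (fun j => x j - y j) i = encL G x i - encL G y i.
Proof. by rewrite /encL -sumrB; apply: eq_bigr => j _; rewrite mulmxBl. Qed.

Lemma restrict_run_inj t (M M' : 'M[F]_(N, K)) (evs evs' : seq (event L n alpha))
    (S : {set 'I_n}) :
  basis_of fullv [seq b i | i <- enum 'I_N] ->
  free [seq g p.1 p.2 | p : 'I_k * 'I_alpha] ->
  is_MDS_array G -> optimal_repair G Dm Rm ->
  (2 * t * alpha + K <= alpha * k)%N ->
  (#|(sys_run b g G Dm Rm M evs).2| <= t)%N ->
  (#|(sys_run b g G Dm Rm M' evs').2| <= t)%N ->
  #|S| = k ->
  restrict S (sys_run b g G Dm Rm M evs).1
    = restrict S (sys_run b g G Dm Rm M' evs').1 ->
  M = M'.
Proof.
move=> basis_b free_g mds rep tK tA tA' cardS eqS.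
have [V [dimV devV]] := pollution_bounded_run M evs rep.
have [V' [dimV' devV']] := pollution_bounded_run M' evs' rep.
set c := (sys_run b g G Dm Rm M evs).1 in devV eqS.
set c' := (sys_run b g G Dm Rm M' evs').1 in devV' eqS.
pose x j := gab_enc b g M j - gab_enc b g M' j.
have xS i : i \in S -> forall r, encL G x i 0 r \in (V' + V)%VS.
  move=> iS r; have := congr1 (fun c => c i) eqS; rewrite /restrict iS => eq_i.
  have -> : encL G x i = (c' i - encL G (gab_enc b g M') i)
                         - (c i - encL G (gab_enc b g M) i).
    by rewrite encLB eq_i opprB [RHS]addrC addrA subrK.
  rewrite mxE [X in _ + X]mxE.
  by apply: memvB; [apply/(subvP (addvSl _ _))/devV' | apply/(subvP (addvSr _ _))/devV].
apply: (gab_msg_inj basis_b) => l.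
apply/eqP; rewrite -subr_eq0; apply/eqP; move: l.
apply: (gabidulin_rank_weight free_g (W := (V' + V)%VS)).
  rewrite size_map -cardE card_prod !card_ord mulnC.
  apply: leq_trans tK; rewrite leq_add2r.
  apply: leq_trans (dimv_add_leqif V' V) _.
  have -> : (2 * t * alpha = alpha * t + alpha * t)%N by lia.
  exact: leq_add (leq_trans dimV' (leq_mul (leqnn alpha) tA'))
                 (leq_trans dimV (leq_mul (leqnn alpha) tA)).
move=> _ /mapP[[j r] _ ->]; rewrite -gab_encB.
exact: (MDS_array_lift_vspace mds cardS xS).
Qed.

End Decoding.

Theorem theorem1 (F : finFieldType) (L : fieldExtType F)
  (N K alpha k n d t : nat)
  (b : 'I_N -> L) (g : 'I_k -> 'I_alpha -> L)
  (G : 'I_k -> 'I_n -> 'M[F]_alpha)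
  (Dm : 'I_n -> {set 'I_n} -> 'I_n -> 'M[F]_(alpha, repair_beta k alpha d))
  (Rm : 'I_n -> {set 'I_n} -> 'I_n -> 'M[F]_(repair_beta k alpha d, alpha)) :
  (K < N)%N ->
  (K <= alpha * k)%N ->
  (alpha * k <= N)%N ->
  basis_of fullv [seq b i | i <- enum 'I_N] ->
  free [seq g p.1 p.2 | p : 'I_k * 'I_alpha] ->
  is_MDS_array G ->
  optimal_repair G Dm Rm ->
  (2 * t * alpha + 1 <= alpha * k - K + 1)%N ->
  exists dec : {set 'I_n} -> ('I_n -> 'rV[L]_alpha) -> 'M[F]_(N, K),
    forall (M : 'M[F]_(N, K)) (evs : seq (event L n alpha)),
      (#|(sys_run b g G Dm Rm M evs).2| <= t)%N ->
      forall S : {set 'I_n}, #|S| = k ->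
        dec S (restrict S (sys_run b g G Dm Rm M evs).1) = M.
Proof.
move=> _ K_le _ basis_b free_g mds rep t_le.
have tK : (2 * t * alpha + K <= alpha * k)%N by lia.
pose explains S (y : 'I_n -> 'rV[L]_alpha) (M : 'M[F]_(N, K)) := exists evs : seq (event L n alpha),
  (#|(sys_run b g G Dm Rm M evs).2| <= t)%N /\
  restrict S (sys_run b g G Dm Rm M evs).1 = y.
exists (fun S y => epsilon (inhabits 0) (explains S y)) => M evs tA S cardS.
have explainsM : explains S (restrict S (sys_run b g G Dm Rm M evs).1) M.
  by exists evs.
have [evs' [tA' eq_y]] := epsilon_spec (inhabits 0) _ (ex_intro _ M explainsM).
symmetry; apply: (restrict_run_inj basis_b free_g mds rep tK tA tA' cardS).
by rewrite eq_y.
Qed.
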